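(* In the troll-farm voting model described in the context, fix an information structure $(F_0,F_1)$ and a type distribution $H$ with $H(\tfrac12)<\tfrac12$, and suppose that under $H$ the government wins the election in both states when the sender plays optimally, i.e. $V_0^*(H)\ge\tfrac12$ and $V_1^*(H)\ge\tfrac12$. Then there exists a type distribution $\hat H$ (a cdf with a density with full support on $\mathbb{R}$) that admits greater polarisation than $H$ and under which the election aggregates information, i.e. $V_0^*(\hat H)<\tfrac12\le V_1^*(\hat H)$.
   Context: Model. There is an unknown state $\theta\in\{0,1\}$, each state having prior probability $\tfrac12$. There is a continuum of voters of mass one; each voter has a type $x\in\mathbb{R}$, types being distributed according to a cdf $H$ with density $h$ having full support on $\mathbb{R}$. A voter of type $x$ who votes for the government receives payoff $1-x$ if $\theta=1$ and $-x$ if $\theta=0$; voting against gives payoff $0$. In state $\theta$, each voter independently draws an informative signal $s\in\mathbb{R}$ from a cdf $F_\theta$ with density $f_\theta$ having full support on $\mathbb{R}$, where $f_0(0)=f_1(0)$ and $m(s)=f_1(s)/f_0(s)$ is strictly increasing. For $x\in(0,1)$ let $s^*(x)=m^{-1}\!\left(\frac{x}{1-x}\right)$. A sender chooses, for each type $x$, $\alpha_x\in[0,1]$ (mass of trolls) and a probability distribution $\tilde F_x$ with density $\tilde f_x$ (trolls' messages, not depending on the state). A voter of type $x$ observes, with probability $1-\alpha_x$, her informative signal, and with probability $\alpha_x$ a message drawn from $\tilde F_x$, without knowing which; after observing $s$ her posterior is $$\pi_x(s)=\frac{(1-\alpha_x)f_1(s)+\alpha_x\tilde f_x(s)}{(1-\alpha_x)f_1(s)+\alpha_x\tilde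 f_x(s)+(1-\alpha_x)f_0(s)+\alpha_x\tilde f_x(s)},$$ and she votes for the government iff $\pi_x(s)\ge x$. Her probability of voting for the government in state $\theta$ is $p_\theta(x)=\int_{\{s:\pi_x(s)\ge x\}}[(1-\alpha_x)f_\theta(s)+\alpha_x\tilde f_x(s)]\,ds$, and the vote share is $V_\theta=\int p_\theta(x)\,dH(x)$. The sender's payoff is $u(V_\theta)$, $u$ strictly increasing; she maximises $\tfrac12u(V_0)+\tfrac12u(V_1)$, and among choices with the same vote shares in both states prefers pointwise-smaller $\alpha$ (strictly smaller for some $x$). $V_\theta^*(H)$ denotes the vote share in state $\theta$ under the sender's optimal strategy when the type distribution is $H$; it equals $V_0^*(H)=H(\tfrac12)+\int_{1/2}^{1}\frac{F_0[s^*(x)]-F_1[s^*(x)]}{xF_0[s^*(x)]-(1-x)F_1[s^*(x)]}(1-x)\,dH(x)$ and $V_1^*(H)=H(\tfrac12)+\int_{1/2}^{1}\frac{F_0[s^*(x)]-F_1[s^*(x)]}{xF_0[s^*(x)]-(1-x)F_1[s^*(x)]}\,x\,dH(x)$. The government wins in state $\theta$ iff its vote share is at least $\tfrac12$; the election aggregates information iff the government wins in state $1$ and not in state $0$. Definition (polarisation): a distribution $\hat H$ admits greater polarisation than $H$ iff $\hat H(x)\ge H(x)$ for all $x\le\tfrac12$ and $\hat H(x)\le H(x)$ for all $x\ge\tfrac12$. *)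

From HB Require Import structures.
From mathcomp Require Import all_boot all_order all_algebra.
From mathcomp Require Import all_classical all_reals all_analysis.
Set Implicit Arguments. Unset Strict Implicit. Unset Printing Implicit Defensive.
Import Order.TTheory GRing.Theory Num.Theory.
Local Open Scope classical_set_scope.
Local Open Scope ring_scope.

Section Defs.
Variable R : realType.
Notation mu := (@lebesgue_measure R).

Definition cdf_with_density (G g : R -> R) : Prop :=
  [/\ (forall x, 0 <= g x),
      measurable_fun setT g,
      (\int[mu]_(t in setT) (g t)%:E = 1)%E &
      (forall x, ((G x)%:E = \int[mu]_(t in `]-oo, x]) (g t)%:E)%E)].

(* full support on R: every nondegenerate interval has positive mass *)
Definition full_support (G : R -> R) : Prop :=
  forall a b, a < b -> G a < G b.

Definition type_distribution (H h : R -> R) : Prop :=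
  cdf_with_density H h /\ full_support H.

Definition lik_ratio (f0 f1 : R -> R) (s : R) : R := f1 s / f0 s.

(* information structure (F0,F1) with densities f0,f1 of full support
   (positive densities so that m is defined everywhere), f0(0)=f1(0),
   m strictly increasing, and m^{-1}(y) defined for all y > 0
   (so that s*(x) is defined for every x in (0,1)). *)
Definition info_structure (F0 F1 f0 f1 : R -> R) : Prop :=
  [/\ cdf_with_density F0 f0 /\ cdf_with_density F1 f1,
      (forall s, 0 < f0 s) /\ (forall s, 0 < f1 s),
      f0 0 = f1 0,
      (forall s t, s < t -> lik_ratio f0 f1 s < lik_ratio f0 f1 t) &
      (forall y, 0 < y -> exists s, lik_ratio f0 f1 s = y)].

Definition sstar (f0 f1 : R -> R) (x : R) : R :=
  xget 0 [set s | lik_ratio f0 f1 s = x / (1 - x)].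

Definition vfactor (F0 F1 f0 f1 : R -> R) (x : R) : R :=
  let s := sstar f0 f1 x in
  (F0 s - F1 s) / (x * F0 s - (1 - x) * F1 s).

(* V_0^*(H) and V_1^*(H); dH(x) = h(x) dx *)
Definition V0star (F0 F1 f0 f1 H h : R -> R) : R :=
  H (2^-1) + Rintegral mu `[2^-1, 1]%classic
     (fun x => vfactor F0 F1 f0 f1 x * (1 - x) * h x).

Definition V1star (F0 F1 f0 f1 H h : R -> R) : R :=
  H (2^-1) + Rintegral mu `[2^-1, 1]%classic
     (fun x => vfactor F0 F1 f0 f1 x * x * h x).

Definition more_polarised (Hh H : R -> R) : Prop :=
  (forall x, x <= 2^-1 -> H x <= Hh x) /\
  (forall x, 2^-1 <= x -> Hh x <= H x).

End Defs.

From Pilot Require Import Defs.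
From mathcomp Require Import all_boot all_order all_algebra.
From mathcomp Require Import all_classical all_reals all_analysis.
From mathcomp Require Import measurable_realfun.
From mathcomp Require Import ring lra.

(* On [1/2, 1] the V1* integrand exceeds the V0* integrand by
   (2x - 1) vfactor(x) h(x) >= 0, so a0 := V0* - H(1/2) is strictly smaller
   than a1 := V1* - H(1/2) as soon as a0 > 0, which the hypotheses force.
   Keep the type density below 1/2, scale it on [1/2, 1] by
   lam := (1/2 - H(1/2)) / a1, which is at most 1, and move the removed mass
   beyond 1.  The new distribution is more polarised and its vote shares are
   H(1/2) + lam a0 < 1/2 = H(1/2) + lam a1. *)

Set Implicit Arguments.
Unset Strict Implicit.
Unset Printing Implicit Defensive.
Import Order.TTheory GRing.Theory Num.Theory.
Local Open Scope ring_scope.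
Local Open Scope classical_set_scope.

Section RealMeasure.
Context {R : realType}.
Local Notation mu := (@lebesgue_measure R).

Lemma measurable_inv : measurable_fun [set: R] (GRing.inv : R -> R).
Proof.
rewrite -(setUv [set (0 : R)]); apply/measurable_funU => //.
  exact: measurableC.
split; first exact: measurable_fun_set1.
apply: open_continuous_measurable_fun.
  apply: closed_openC; apply: accessible_closed_set1.
  exact/hausdorff_accessible/Rhausdorff.
by move=> x; rewrite inE /= => /eqP x0; exact: inv_continuous.
Qed.

Lemma ge0_integral_itvNy_split (f : R -> \bar R) (a : R) (y : itv_bound R) :
  measurable_fun [set: R] f -> (forall x, (0 <= f x)%E) -> (BRight a <= y)%O ->
  (\int[mu]_(t in [set` Interval -oo%O y]) f t =
   \int[mu]_(t in `]-oo, a]) f t +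
   \int[mu]_(t in [set` Interval (BRight a) y]) f t)%E.
Proof.
move=> mf f0 ay; rewrite (@itv_bndbnd_setU _ _ _ (BRight a)) //.
rewrite ge0_integral_setU //; first exact: measurable_funS mf.
apply/disj_setPS => z [] /=; rewrite !in_itv /= => za.
by case: y ay => [b y|[]] //= _; rewrite ltNge za.
Qed.

Lemma EFin_sub_eq (a b : R) (I : \bar R) :
  b%:E = (a%:E + I)%E -> I = (b - a)%:E.
Proof. by case: I => [r||] //= [->]; rewrite addrC addrK. Qed.

Section Cdf.
Variables (G g : R -> R).
Hypothesis hG : cdf_with_density G g.

Lemma density_ge0 x : 0 <= g x.
Proof. by case: hG. Qed.

Lemma density_EFin_ge0 x : (0 <= (g x)%:E)%E.
Proof. by rewrite lee_fin density_ge0. Qed.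

Lemma measurable_density : measurable_fun [set: R] (EFin \o g).
Proof. by case: hG => _ mg _ _; apply/measurable_EFinP. Qed.

Lemma measurable_density_in (D : set (measurableTypeR R)) :
  measurable_fun D (EFin \o g).
Proof. exact: measurable_funS measurable_density. Qed.

Lemma cdfE x : (G x)%:E = (\int[mu]_(t in `]-oo, x]) (g t)%:E)%E.
Proof. by case: hG. Qed.

Lemma integrable_density (D : set R) : measurable D ->
  mu.-integrable D (EFin \o g).
Proof.
move=> mD; apply: (@integrableS _ _ _ mu setT) => //.
apply/integrableP; split; first exact: measurable_density.
under eq_integral => t _ do rewrite /= ger0_norm ?density_ge0 //.
by case: hG => _ _ -> _; exact: ltry.
Qed.

Lemma integral_density_itvy x :
  (\int[mu]_(t in `]x, +oo[) (g t)%:E)%E = (1 - G x)%:E.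
Proof.
apply: EFin_sub_eq; case: hG => _ _ <- _; rewrite cdfE -set_itvNyy.
apply: ge0_integral_itvNy_split => //.
  exact: measurable_density.
exact: density_EFin_ge0.
Qed.

Lemma integral_density_itvoc a b : a <= b ->
  (\int[mu]_(t in `]a, b]) (g t)%:E)%E = (G b - G a)%:E.
Proof.
move=> ab; apply: EFin_sub_eq; rewrite !cdfE.
apply: ge0_integral_itvNy_split => //.
  exact: measurable_density.
exact: density_EFin_ge0.
Qed.

Lemma cdf_ge0 x : 0 <= G x.
Proof.
by rewrite -lee_fin cdfE; apply: integral_ge0 => t _; exact: density_EFin_ge0.
Qed.

Lemma cdf_le1 x : G x <= 1.
Proof.
rewrite -subr_ge0 -lee_fin -integral_density_itvy.
by apply: integral_ge0 => t _; exact: density_EFin_ge0.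
Qed.

Lemma cdf_nondecreasing : {homo G : x y / x <= y}.
Proof.
move=> x y xy; rewrite -subr_ge0 -lee_fin -integral_density_itvoc //.
by apply: integral_ge0 => t _; exact: density_EFin_ge0.
Qed.

End Cdf.

Lemma cdf_with_density_integral (g : R -> R) :
  (forall x, 0 <= g x) -> measurable_fun [set: R] g ->
  (\int[mu]_(t in [set: R]) (g t)%:E = 1)%E ->
  cdf_with_density (fun x => fine (\int[mu]_(t in `]-oo, x]) (g t)%:E)%E) g.
Proof.
move=> g0 mg g1; split => // x; rewrite fineK // ge0_fin_numE; last first.
  by apply: integral_ge0 => t _; rewrite lee_fin.
rewrite (le_lt_trans _ (ltry 1)) // -g1.
apply: ge0_subset_integral => //; first exact/measurable_EFinP.
by move=> t _; rewrite lee_fin.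
Qed.

Lemma cdf_le_density_le (G g G' g' : R -> R) x :
  cdf_with_density G g -> cdf_with_density G' g' ->
  (forall t, t <= x -> g' t <= g t) -> G' x <= G x.
Proof.
move=> hG hG' g'g; rewrite -lee_fin (cdfE hG) (cdfE hG').
apply: ge0_le_integral.
- exact: measurable_itv.
- by move=> t _; rewrite lee_fin (density_ge0 hG').
- exact: (measurable_density_in hG').
- exact: (measurable_density_in hG).
- by move=> t; rewrite /= in_itv /= lee_fin => /g'g.
Qed.

Lemma full_support_density_ge (G g G' g' : R -> R) (k : R) :
  cdf_with_density G g -> cdf_with_density G' g' -> full_support G ->
  0 < k -> (forall t, k * g t <= g' t) -> full_support G'.
Proof.
move=> hG hG' fsG k0 kgg' a b ab.
have kG : k * (G b - G a) <= G' b - G' a.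
  rewrite -lee_fin EFinM -(integral_density_itvoc hG (ltW ab)).
  rewrite -(integral_density_itvoc hG' (ltW ab)).
  rewrite -(@ge0_integralZl_EFin _ _ _ mu) ?(ltW k0) //; last first.
    - exact: (measurable_density_in hG).
    - by move=> t _; exact: (density_EFin_ge0 hG).
  apply: ge0_le_integral => //.
  - by move=> t _; rewrite -EFinM lee_fin mulr_ge0 ?(ltW k0) ?(density_ge0 hG).
  - by apply: measurable_funeM; exact: (measurable_density_in hG).
  - exact: (measurable_density_in hG').
  - by move=> t _; rewrite -EFinM lee_fin.
rewrite -subr_gt0 (lt_le_trans _ kG) // mulr_gt0 // subr_gt0; exact: fsG.
Qed.

Lemma full_support_cdf_lt1 (G g : R -> R) x :
  cdf_with_density G g -> full_support G -> G x < 1.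
Proof.
move=> hG fsG; apply: lt_le_trans (fsG x (x + 1) _) (cdf_le1 hG _).
by rewrite ltrDl.
Qed.

Section Reweight.
Variables (H h : R -> R) (a b lam : R).
Hypotheses (hH : cdf_with_density H h) (ab : a <= b).
Hypotheses (lam_gt0 : 0 < lam) (lam_le1 : lam <= 1) (Hb_lt1 : H b < 1).

(* [nu] is the weight beyond [b] that restores total mass one. *)
Let nu := (1 - H a - lam * (H b - H a)) / (1 - H b).
(* 1 on ]-oo, a[, lam on [a, b] and nu beyond b, written as a nonincreasing
   plus a nondecreasing step function so that measurability is immediate. *)
Let weight x := (if x < a then 1 else lam) + (if x <= b then 0 else nu - lam).
Let hh x := weight x * h x.

Let nu_ge1 : 1 <= nu.
Proof.
rewrite ler_pdivlMr ?subr_gt0 // mul1r.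
have HaHb : H a <= H b := cdf_nondecreasing hH ab.
suff : lam * (H b - H a) <= H b - H a by lra.
by rewrite ler_piMl // subr_ge0.
Qed.

Let mass_split : H a + lam * (H b - H a) + nu * (1 - H b) = 1.
Proof. by rewrite /nu divfK ?subr_eq0 1?eq_sym ?lt_eqF //; ring. Qed.

Let weight_lt x : x < a -> weight x = 1.
Proof. by move=> xa; rewrite /weight xa (le_trans (ltW xa) ab) addr0. Qed.

Let weight_itv x : a <= x <= b -> weight x = lam.
Proof. by case/andP => ax xb; rewrite /weight ltNge ax xb addr0. Qed.

Let weight_gt x : b < x -> weight x = nu.
Proof.
move=> bx; rewrite /weight ltNge (le_trans ab (ltW bx)) leNgt bx /=.
by rewrite addrC subrK.
Qed.

Let weight_ge x : lam <= weight x.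
Proof.
have := nu_ge1; have := lam_le1.
by rewrite /weight; case: ifP => _; case: ifP => _; lra.
Qed.

Let weight_le1 x : x <= b -> weight x <= 1.
Proof.
by move=> xb; rewrite /weight xb addr0; case: ifP.
Qed.

Let measurable_weight : measurable_fun [set: R] weight.
Proof.
have lam1 := lam_le1; have nu1 := nu_ge1.
apply: measurable_funD.
  apply: nonincreasing_measurable => // x y xy.
  by case: (ltP x a) => xa; case: (ltP y a) => ya; lra.
apply: nondecreasing_measurable => // x y xy.
by case: (leP x b) => xb; case: (leP y b) => yb; lra.
Qed.

Let hh_ge0 x : 0 <= hh x.
Proof.
by rewrite mulr_ge0 ?(density_ge0 hH) // (le_trans (ltW lam_gt0) (weight_ge x)).
Qed.

Let measurable_hh : measurable_fun [set: R] hh.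
Proof. by apply: measurable_funM measurable_weight _; case: hH. Qed.

Let integral_hh_const (D : set (measurableTypeR R)) c :
  measurable D -> 0 <= c -> {in D, forall t, weight t = c} ->
  (\int[mu]_(t in D) (hh t)%:E = c%:E * \int[mu]_(t in D) (h t)%:E)%E.
Proof.
move=> mD c0 wc; rewrite -ge0_integralZl_EFin //; last first.
- exact: (measurable_density_in hH).
- by move=> t _; exact: (density_EFin_ge0 hH).
by apply: eq_integral => t /wc wt; rewrite /hh wt EFinM.
Qed.

Let integral_hh_itvNy x : x <= a ->
  (\int[mu]_(t in `]-oo, x]) (hh t)%:E)%E = (H x)%:E.
Proof.
move=> xa; rewrite (cdfE hH) -!integral_itv_bndo_bndc; first last.
- exact: (measurable_density_in hH).
- by apply/measurable_EFinP; exact: measurable_funS measurable_hh.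
apply: eq_integral => t; rewrite inE /= in_itv /= => tx.
by rewrite /hh weight_lt ?mul1r // (lt_le_trans tx).
Qed.

Let integral_hh_itvoc :
  (\int[mu]_(t in `]a, b]) (hh t)%:E)%E = (lam * (H b - H a))%:E.
Proof.
rewrite (integral_hh_const (c := lam)) ?(ltW lam_gt0) //.
  by rewrite (integral_density_itvoc hH ab) -EFinM.
move=> t; rewrite inE /= in_itv /= => /andP[/ltW ta tb].
by apply: weight_itv; rewrite ta.
Qed.

Let integral_hh_itvy x : b <= x ->
  (\int[mu]_(t in `]x, +oo[) (hh t)%:E)%E = (nu * (1 - H x))%:E.
Proof.
move=> bx; rewrite (integral_hh_const (c := nu)) ?(le_trans _ nu_ge1) //.
  by rewrite (integral_density_itvy hH) -EFinM.
move=> t; rewrite inE /= in_itv /= andbT => xt.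
by rewrite weight_gt // (le_lt_trans bx).
Qed.

Let integral_hh_total : (\int[mu]_(t in [set: R]) (hh t)%:E)%E = 1%:E.
Proof.
have mhh : measurable_fun [set: R] (EFin \o hh) by exact/measurable_EFinP.
have hh0 t : (0 <= (EFin \o hh) t)%E by rewrite lee_fin.
rewrite -set_itvNyy (ge0_integral_itvNy_split (a := b) mhh hh0) //.
rewrite (ge0_integral_itvNy_split (a := a) mhh hh0) ?bnd_simp //.
rewrite integral_hh_itvNy // integral_hh_itvoc integral_hh_itvy //.
by rewrite -!EFinD mass_split.
Qed.

Lemma reweighted_cdf : exists Hh hh : R -> R,
  [/\ cdf_with_density Hh hh, forall t, lam * h t <= hh t,
      forall x, x <= a -> Hh x = H x, forall x, Hh x <= H x &
      forall x, a <= x <= b -> hh x = lam * h x].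
Proof.
have hHh := cdf_with_density_integral hh_ge0 measurable_hh integral_hh_total.
exists (fun x => fine (\int[mu]_(t in `]-oo, x]) (hh t)%:E)%E), hh; split => //.
- by move=> t; rewrite /hh ler_wpM2r ?(density_ge0 hH) ?weight_ge.
- by move=> x xa; rewrite integral_hh_itvNy.
- move=> x; have [xb|bx] := leP x b.
    apply: (cdf_le_density_le hH hHh) => t tx.
    by rewrite /hh ler_piMl ?(density_ge0 hH) ?weight_le1 ?(le_trans tx).
  have := integral_density_itvy hHh x.
  rewrite integral_hh_itvy ?(ltW bx) // => -[].
  have := cdf_le1 hH x; have := nu_ge1; nra.
- by move=> x /weight_itv; rewrite /hh => ->.
Qed.

End Reweight.

Lemma reweighted_type_distribution (H h : R -> R) (a b lam : R) :
  type_distribution H h -> a <= b -> 0 < lam -> lam <= 1 ->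
  exists Hh hh : R -> R,
    [/\ type_distribution Hh hh, forall x, x <= a -> Hh x = H x,
        forall x, Hh x <= H x & forall x, a <= x <= b -> hh x = lam * h x].
Proof.
move=> [hH fsH] ab lam_gt0 lam_le1.
have [Hh [hh [hHh lam_le HhE Hh_le hhE]]] :=
  reweighted_cdf hH ab lam_gt0 lam_le1 (full_support_cdf_lt1 b hH fsH).
exists Hh, hh; split => //; split => //.
exact: full_support_density_ge hH hHh fsH lam_gt0 lam_le.
Qed.

Lemma lt_Rintegral_1Bx_x (D : set (measurableTypeR R)) (v h : R -> R) :
  measurable D -> (forall x, D x -> [/\ 2^-1 <= x, 0 <= v x & 0 <= h x]) ->
  mu.-integrable D (EFin \o (fun x => v x * (1 - x) * h x)) ->
  mu.-integrable D (EFin \o (fun x => v x * x * h x)) ->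
  0 < \int[mu]_(x in D) (v x * (1 - x) * h x) ->
  \int[mu]_(x in D) (v x * (1 - x) * h x) < \int[mu]_(x in D) (v x * x * h x).
Proof.
move=> mD Dvh ie ig e_gt0; rewrite ltNge; apply/negP => ge_le.
pose d x := v x * x * h x - v x * (1 - x) * h x.
have dE x : d x = (2 * x - 1) * (v x * h x) by rewrite /d; ring.
have d_ge0 x : D x -> 0 <= d x.
  by move=> /Dvh[x12 v0 h0]; rewrite dE !mulr_ge0 //; lra.
have int_d : mu.-integrable D (EFin \o d).
  apply: eq_integrable mD _ _ _ (integrableB mD ig ie) => x _.
  by rewrite /= EFinB.
have md : measurable_fun D (EFin \o d) := measurable_int _ int_d.
have Rint_d0 : \int[mu]_(x in D) d x = 0.
  apply/eqP; rewrite eq_le Rintegral_ge0 // andbT.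
  by rewrite /d RintegralB // subr_le0.
have int_d0 : (\int[mu]_(x in D) `|(d x)%:E|)%E = 0%E.
  under eq_integral => x /[1!inE] /d_ge0 d0 do rewrite gee0_abs ?lee_fin //.
  by rewrite -(fineK (integrable_fin_num mD int_d)); congr EFin; exact: Rint_d0.
have ae_ne : {ae mu, forall x : R, x != 2^-1}.
  exists [set 2^-1]; split => //; first exact: lebesgue_measure_set1.
  by move=> x /= /negP; rewrite negbK => /eqP.
(* Off the null set [x = 1/2], [d x = 0] forces [v x * h x = 0]. *)
have ae_e : ae_eq mu D (EFin \o (fun x => v x * (1 - x) * h x)) (cst 0%E).
  move/(ae_eq_integral_abs _ mD md): int_d0 => ae_d.
  apply: filterS2 ae_d ae_ne => x dx x12 Dx; move: (dx Dx) => /= [].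
  rewrite dE => /eqP; rewrite mulf_eq0 => /orP[|/eqP vh0].
    by move: x12 => /eqP x12 /eqP ?; exfalso; apply: x12; lra.
  by rewrite mulrAC vh0 mul0r.
move: e_gt0.
rewrite /Rintegral (ae_eq_integral (cst 0%E) _ mD) ?integral0 ?ltxx //.
exact: measurable_int ie.
Qed.

Lemma Rintegral_scale_density (D : set (measurableTypeR R))
    (phi h hh : R -> R) k :
  measurable D -> {in D, forall x, hh x = k * h x} ->
  mu.-integrable D (EFin \o (fun x => phi x * h x)) ->
  \int[mu]_(x in D) (phi x * hh x) = k * \int[mu]_(x in D) (phi x * h x).
Proof.
move=> mD hhE iphi; rewrite -RintegralZl //.
by apply: eq_Rintegral => x /hhE ->; rewrite mulrCA.
Qed.

Section InfoStructure.
Variables (F0 F1 f0 f1 : R -> R).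
Hypothesis hI : info_structure F0 F1 f0 f1.
Local Notation m := (lik_ratio f0 f1).
Local Notation sstar := (sstar f0 f1).
Local Notation vfactor := (vfactor F0 F1 f0 f1).

Let hF0 : cdf_with_density F0 f0. Proof. by case: hI => -[]. Qed.
Let hF1 : cdf_with_density F1 f1. Proof. by case: hI => -[]. Qed.

Let f0_gt0 s : 0 < f0 s. Proof. by case: hI => _ []. Qed.
Let f1_gt0 s : 0 < f1 s. Proof. by case: hI => _ []. Qed.

Let lik_ratio_increasing s t : s < t -> m s < m t.
Proof. by case: hI => _ _ _ + _; apply. Qed.

Lemma lik_ratio_gt0 s : 0 < m s.
Proof. exact: divr_gt0 (f1_gt0 s) (f0_gt0 s). Qed.

Lemma lik_ratio0 : m 0 = 1.
Proof.
by case: hI => _ _ f01 _ _; rewrite /lik_ratio -f01 divff // gt_eqF ?f0_gt0.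
Qed.

Lemma sstarE x : 0 < x < 1 -> m (sstar x) = x / (1 - x).
Proof.
case/andP => x0 x1; apply: (@xgetPex _ 0 [set s | m s = x / (1 - x)]).
by case: hI => _ _ _ _; apply; rewrite divr_gt0 // subr_gt0.
Qed.

(* For [x >= 1] the defining equation has no solution and [sstar x] is the
   default value [0]. *)
Lemma sstar_ge0 x : 2^-1 <= x -> 0 <= sstar x.
Proof.
move=> x12; rewrite /Defs.sstar; case: xgetP => [_ -> |_] //.
set s := xget _ _ => ms.
rewrite leNgt; apply/negP => /lik_ratio_increasing; rewrite lik_ratio0 ms.
have := lik_ratio_gt0 s; rewrite ms.
have [x1|x1] := ltP x 1.
  by rewrite ltr_pdivrMr ?subr_gt0 // mul1r; lra.
by rewrite pmulr_rgt0 ?invr_gt0; lra.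
Qed.

Lemma sstar_le x y : 2^-1 <= x -> x <= y -> y < 1 -> sstar x <= sstar y.
Proof.
move=> x12 xy y1; rewrite leNgt; apply/negP => /lik_ratio_increasing.
rewrite !sstarE; try (apply/andP; split; lra).
rewrite ltr_pdivrMr ?subr_gt0 // mulrAC ltr_pdivlMr ?subr_gt0 //; nra.
Qed.

Lemma F1_le_F0 s : 0 <= s -> F1 s <= F0 s.
Proof.
move=> s0; rewrite -lerN2 -(lerD2l 1) -lee_fin.
rewrite -(integral_density_itvy hF0) -(integral_density_itvy hF1).
apply: ge0_le_integral => //.
- by move=> t _; rewrite lee_fin ltW ?f0_gt0.
- exact: (measurable_density_in hF0).
- exact: (measurable_density_in hF1).
move=> t; rewrite /= in_itv /= andbT lee_fin => st.
have := lik_ratio_increasing (le_lt_trans s0 st); rewrite lik_ratio0.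
by rewrite ltr_pdivlMr ?f0_gt0 // mul1r => /ltW.
Qed.

Lemma vfactor_bound x : 2^-1 <= x -> 0 <= vfactor x /\ vfactor x * x <= 1.
Proof.
move=> x12; rewrite /vfactor /Defs.vfactor /=.
have s0 := sstar_ge0 x12.
have BA := F1_le_F0 s0.
have B0 := cdf_ge0 hF1 (sstar x).
move: BA B0; set A := F0 _; set B := F1 _ => BA B0.
have [den0|den_neq0] := eqVneq (x * A - (1 - x) * B) 0.
  by rewrite den0 invr0 mulr0 mul0r.
have den_gt0 : 0 < x * A - (1 - x) * B.
  by rewrite lt_neqAle eq_sym den_neq0 /=; nra.
split; first by apply: divr_ge0; lra.
by rewrite mulrAC ler_pdivrMr // mul1r; nra.
Qed.

Lemma measurable_cdf_sstar (F f : R -> R) : cdf_with_density F f ->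
  measurable_fun (`[2^-1, 1[ : set R) (F \o sstar).
Proof.
move=> hF; pose psi x := if x < 1 then F (sstar (Num.max x 2^-1)) else 1.
have psi_nd : {homo psi : x y / x <= y}.
  move=> x y xy; rewrite /psi; case: ifPn => x1; case: ifPn => y1.
  - apply: (cdf_nondecreasing hF); apply: sstar_le.
    + by rewrite le_max lexx orbT.
    + by rewrite ge_max !le_max xy lexx !orbT.
    + by rewrite gt_max y1 /=; lra.
  - exact: (cdf_le1 hF).
  - by move: x1 y1; rewrite -!leNgt; lra.
  - by [].
apply: (eq_measurable_fun psi); last first.
  exact: measurable_funS (nondecreasing_measurable measurableT psi_nd).
by move=> x; rewrite inE /= in_itv /= => /andP[x12 x1]; rewrite /psi x1 max_l.
Qed.

Lemma measurable_vfactor : measurable_fun (`[2^-1, 1] : set R) vfactor.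
Proof.
apply/(measurable_fun_itv_bndo_bndcP (BLeft 2^-1)).
have m0 := measurable_cdf_sstar hF0; have m1 := measurable_cdf_sstar hF1.
apply: measurable_funM; first exact: measurable_funB.
apply: measurableT_comp; first exact: measurable_inv.
by apply: measurable_funB; apply: measurable_funM => //; apply: measurable_funB.
Qed.

Lemma integrable_vfactor_mul (k h : R -> R) :
  measurable_fun (`[2^-1, 1] : set R) k ->
  (forall x, 2^-1 <= x <= 1 -> 0 <= k x <= x) ->
  (forall x, 0 <= h x) -> mu.-integrable `[2^-1, 1] (EFin \o h) ->
  mu.-integrable `[2^-1, 1] (EFin \o (fun x => vfactor x * k x * h x)).
Proof.
move=> mk k_bnd h0 ih; apply: le_integrable (ih) => //.
  apply/measurable_EFinP; apply: measurable_funM.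
    exact: (measurable_funM measurable_vfactor mk).
  by apply/measurable_EFinP; exact: (measurable_int _ ih).
move=> x; rewrite /= in_itv /= => x_itv; have /andP[x12 _] := x_itv.
have [v0 vx1] := vfactor_bound x12; have /andP[k0 kx] := k_bnd x x_itv.
have vk_ge0 : 0 <= vfactor x * k x by exact: mulr_ge0.
have vk_le1 : vfactor x * k x <= 1 := le_trans (ler_wpM2l v0 kx) vx1.
by rewrite lee_fin !ger0_norm ?(mulr_ge0 vk_ge0) // ler_piMl.
Qed.

Lemma integrable_vfactor_1Bx (H h : R -> R) : cdf_with_density H h ->
  mu.-integrable `[2^-1, 1] (EFin \o (fun x => vfactor x * (1 - x) * h x)).
Proof.
move=> hH; apply: integrable_vfactor_mul (density_ge0 hH) _.
- by apply: measurable_funB => //; exact: measurable_cst.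
- by move=> x /andP[x12 x1]; apply/andP; split; lra.
- exact: (integrable_density hH (measurable_itv _)).
Qed.

Lemma integrable_vfactor_x (H h : R -> R) : cdf_with_density H h ->
  mu.-integrable `[2^-1, 1] (EFin \o (fun x => vfactor x * x * h x)).
Proof.
move=> hH; apply: integrable_vfactor_mul (density_ge0 hH) _ => //.
- by move=> x /andP[x12 _]; apply/andP; split; lra.
- exact: (integrable_density hH (measurable_itv _)).
Qed.

Lemma Rintegral_vfactor_lt (H h : R -> R) : cdf_with_density H h ->
  0 < \int[mu]_(x in `[2^-1, 1]) (vfactor x * (1 - x) * h x) ->
  \int[mu]_(x in `[2^-1, 1]) (vfactor x * (1 - x) * h x) <
  \int[mu]_(x in `[2^-1, 1]) (vfactor x * x * h x).
Proof.
move=> hH; apply: lt_Rintegral_1Bx_x.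
- exact: measurable_itv.
- move=> x; rewrite /= in_itv /= => /andP[x12 _].
  by have [v0 _] := vfactor_bound x12; split => //; exact: (density_ge0 hH).
- exact: integrable_vfactor_1Bx hH.
- exact: integrable_vfactor_x hH.
Qed.

End InfoStructure.

End RealMeasure.

Theorem proposition3 (R : realType) (F0 F1 f0 f1 H h : R -> R) :
  info_structure F0 F1 f0 f1 ->
  type_distribution H h ->
  H (2^-1) < 2^-1 ->
  2^-1 <= V0star F0 F1 f0 f1 H h ->
  2^-1 <= V1star F0 F1 f0 f1 H h ->
  exists Hh hh : R -> R,
    [/\ type_distribution Hh hh,
        more_polarised Hh H,
        V0star F0 F1 f0 f1 Hh hh < 2^-1 &
        2^-1 <= V1star F0 F1 f0 f1 Hh hh].
Proof.
move=> hI tH; rewrite /V0star /V1star.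
set I := `[2^-1, 1]; set v := vfactor F0 F1 f0 f1.
set a0 := Rintegral (@lebesgue_measure R) I (fun x => v x * (1 - x) * h x).
set a1 := Rintegral (@lebesgue_measure R) I (fun x => v x * x * h x).
set c := H (2^-1) => c_lt V0 V1.
have hH : cdf_with_density H h by case: tH.
have mI : measurable I by exact: measurable_itv.
have a0_gt0 : 0 < a0 by lra.
have a01 : a0 < a1 := Rintegral_vfactor_lt hI hH a0_gt0.
pose lam := (2^-1 - c) / a1.
have lam_gt0 : 0 < lam by rewrite divr_gt0; lra.
have lam_a1 : lam * a1 = 2^-1 - c by rewrite divfK // gt_eqF //; lra.
have lam_le1 : lam <= 1 by rewrite ler_pdivrMr; lra.
have [|Hh [hh [tHh HhE Hh_le hhE]]] :=
    reweighted_type_distribution (a := 2^-1) (b := 1) tH _ lam_gt0 lam_le1.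
  lra.
have hhI : {in I, forall x, hh x = lam * h x} by move=> x; rewrite inE => /hhE.
have V0E : Rintegral (@lebesgue_measure R) I (fun x => v x * (1 - x) * hh x)
    = lam * a0.
  exact: Rintegral_scale_density mI hhI (integrable_vfactor_1Bx hI hH).
have V1E : Rintegral (@lebesgue_measure R) I (fun x => v x * x * hh x)
    = lam * a1.
  exact: Rintegral_scale_density mI hhI (integrable_vfactor_x hI hH).
exists Hh, hh; split => //.
- by split => x x12; [rewrite HhE | exact: Hh_le].
- have : lam * a0 < lam * a1 by rewrite ltr_pM2l.
  by rewrite HhE // -/c V0E; lra.
- by rewrite HhE // -/c V1E; lra.
Qed.
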